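(* Let $H$ be a Hilbert space, $L:H\to[0,\infty)$ of class $C^2$, and $c:[0,\infty)\to[0,\infty)$ nonincreasing with $c(r)\le\inf\{|\nabla L(x)|/\sqrt{L(x)}:|x|\le r\}$ for all $r\ge0$ (convention $0/0=\infty$), and assume $c(r)>0$ for all $r>0$. If a solution $(x_t)_{t\ge0}$ of $\dot x(t)=-\nabla L(x(t))$ is bounded in $H$, then it converges in $H$ to a minimum of $L$, i.e. to some $x_\infty$ with $L(x_\infty)=0$. *)

From HB Require Import structures.
From mathcomp Require Import all_boot all_order all_algebra.
From mathcomp Require Import all_classical all_reals all_analysis.
Set Implicit Arguments. Unset Strict Implicit. Unset Printing Implicit Defensive.
Import Order.TTheory GRing.Theory Num.Theory.
Import numFieldNormedType.Exports.
Local Open Scope ring_scope.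

(* [ip] is a (real) inner product on V inducing the norm of V.
   Together with completeness of V this makes V a real Hilbert space. *)
Definition is_inner_product (R : realType) (V : normedModType R)
  (ip : V -> V -> R) : Prop :=
  [/\ (forall x y, ip x y = ip y x),
      (forall a x y z, ip (a *: x + y) z = a * ip x z + ip y z),
      (forall x, 0 <= ip x x) &
      (forall x, `|x| = Num.sqrt (ip x x))].

Definition is_gradient (R : realType) (V : normedModType R)
  (ip : V -> V -> R) (L : V -> R) (g : V -> V) : Prop :=
  forall x, differentiable L x /\ forall v, 'd L x v = ip (g x) v.

Definition C1_map (R : realType) (V : normedModType R) (f : V -> V) : Prop :=
  (forall x, differentiable f x) /\
  (forall x (e : R), 0 < e -> exists2 d : R, 0 < d &
     forall y, `|y - x| < d -> forall v, `|'d f y v - 'd f x v| <= e * `|v|).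

(* Along the flow, d/dt L(x t) = -|grad L(x t)|^2.  The trajectory stays in a
   ball of radius r > 0, where |grad L| >= k sqrt L with k = c(r) > 0, so
   G = (2/k) sqrt(L o x) satisfies G' <= -|grad L(x)| = -|x'|: the trajectory
   has finite length, hence is Cauchy and converges in the complete space H.
   If L vanishes at some time, the trajectory is stationary from then on.
   Finally L(x t) decreases to L(x_oo); if this limit were positive, L(x t)
   would decrease at rate at least k^2 L(x_oo) forever and become negative. *)

From HB Require Import structures.
From mathcomp Require Import all_boot all_order all_algebra.
From mathcomp Require Import all_classical all_reals all_analysis.
From mathcomp Require Import ring lra.
Import Order.TTheory GRing.Theory Num.Theory.
Import numFieldNormedType.Exports.
Local Open Scope classical_set_scope.
Local Open Scope ring_scope.

Section InnerProduct.
Context {R : realType} {V : normedModType R} {ip : V -> V -> R}.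
Hypothesis ip_inner : is_inner_product ip.

Lemma ipDl x y z : ip (x + y) z = ip x z + ip y z.
Proof. by case: ip_inner => _ ipl _ _; rewrite -{1}(scale1r x) ipl mul1r. Qed.

Lemma ip0l z : ip 0 z = 0.
Proof. by apply: (@addrI _ (ip 0 z)); rewrite -ipDl !addr0. Qed.

Lemma ipZl a x z : ip (a *: x) z = a * ip x z.
Proof. by case: ip_inner => _ ipl _ _; rewrite -[a *: x]addr0 ipl ip0l addr0. Qed.

Lemma ipBl x y z : ip (x - y) z = ip x z - ip y z.
Proof. by rewrite ipDl -scaleN1r ipZl mulN1r. Qed.

Lemma ipDr x y z : ip z (x + y) = ip z x + ip z y.
Proof. by case: ip_inner => ipC _ _ _; rewrite ipC ipDl !(ipC z). Qed.

Lemma ip_normr2 x : ip x x = `|x| ^+ 2.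
Proof. by case: ip_inner => _ _ ip_ge0 ->; rewrite sqr_sqrtr. Qed.

Lemma ip_le_norm x y : ip x y <= `|x| * `|y|.
Proof.
have normD2 : `|x + y| ^+ 2 = `|x| ^+ 2 + 2 * ip x y + `|y| ^+ 2.
  case: ip_inner => ipC _ _ _; rewrite -!ip_normr2 ipDl !ipDr (ipC y x).
  by rewrite mulr2n mulrDl mul1r !addrA.
have : `|x + y| ^+ 2 <= (`|x| + `|y|) ^+ 2.
  by rewrite ler_sqr ?nnegrE ?addr_ge0 ?ler_normD.
rewrite normD2 sqrrD; lra.
Qed.

Lemma normr_ip_le x y : `|ip x y| <= `|x| * `|y|.
Proof.
rewrite ler_norml ip_le_norm andbT lerNl -mulN1r -ipZl scaleN1r.
by rewrite -[X in X * _](normrN x) ip_le_norm.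
Qed.

Lemma continuous_ipl u : continuous (ip^~ u).
Proof.
move=> v; apply/cvgrPdist_lt => e e_gt0.
have u1_gt0 : 0 < `|u| + 1 by rewrite ltr_wpDl.
have eu_gt0 : 0 < e / (`|u| + 1) by rewrite divr_gt0.
near=> w.
have : `|v - w| < e / (`|u| + 1) by near: w; exact: cvgr_dist_lt.
rewrite ltr_pdivlMr // -ipBl => vw_lt.
apply: le_lt_trans (normr_ip_le _ _) (le_lt_trans _ vw_lt).
by rewrite ler_wpM2l ?lerDl.
Unshelve. all: by end_near. Qed.

Lemma is_derive_ipl {f : R -> V} {t : R} {df : V} (u : V) :
  is_derive t (1 : R) f df -> is_derive t (1 : R) (fun s => ip (f s) u) (ip df u).
Proof.
move=> [f_derivable f_derive].
have quotient : (fun h : R => h^-1 *: (ip (f (h *: 1 + t)) u - ip (f t) u))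
    = ip^~ u \o (fun h : R => h^-1 *: (f (h *: 1 + t) - f t)).
  by apply/funext => h /=; rewrite ipZl ipBl.
have cvg_f : (fun h : R => h^-1 *: (f (h *: 1 + t) - f t)) @ 0^' --> df.
  by rewrite -f_derive; exact: f_derivable.
have cvg_ip := cvg_comp _ _ cvg_f (continuous_ipl u df).
split; first by apply/cvg_ex; exists (ip df u); rewrite /= quotient.
by rewrite /derive /= quotient; exact: cvg_lim.
Qed.

End InnerProduct.

Lemma ler0_is_derive_nincr {R : realType} {f df : R -> R} {p s t : R} :
  (forall u, p < u -> is_derive u 1 f (df u)) -> (forall u, p < u -> df u <= 0) ->
  p < s -> s <= t -> f t <= f s.
Proof.
move=> f_df df_le0 ps st.
have ptt1 : p < t < t + 1 by rewrite ltrDl ltr01 (lt_le_trans ps st).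
apply: (@ler0_derive1_le_oo _ f p (t + 1)) => //.
- by move=> u /[!in_itv] /andP[/f_df []].
- move=> u /[!in_itv] /andP[pu _]; have [_ f_val] := f_df u pu.
  by rewrite derive1E f_val df_le0.
- move=> u /set_mem /= /[!in_itv] /andP[/f_df [f_derivable _] _].
  exact/differentiable_continuous/derivable1_diffP.
- by rewrite in_itv /= ps (le_lt_trans st) // ltrDl.
Qed.

Section SpeedBound.
Context {R : realType} {V : normedModType R} {ip : V -> V -> R}.
Hypothesis ip_inner : is_inner_product ip.
Context {x v : R -> V} {G G' : R -> R} {p : R}.
Hypothesis x_derive : forall t, p < t -> is_derive t 1 x (v t).
Hypothesis G_derive : forall t, p < t -> is_derive t 1 G (G' t).
Hypothesis speed_le : forall t, p < t -> `|v t| <= - G' t.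

(* Testing against u = x b - x a reduces the claim to the monotonicity of the
   scalar function t |-> <x t, u> + |u| G t. *)
Lemma normB_le_of_speed_bound {a b : R} :
  p < a -> a <= b -> `|x b - x a| <= G a - G b.
Proof.
move=> pa ab; set u := x b - x a.
have G'_le0 t : p < t -> G' t <= 0.
  by move=> pt; rewrite -oppr_ge0 (le_trans (normr_ge0 _) (speed_le _ pt)).
have Gba : G b <= G a := ler0_is_derive_nincr G_derive G'_le0 pa ab.
have : ip (x b) u + `|u| * G b <= ip (x a) u + `|u| * G a.
  apply: (ler0_is_derive_nincr (f := (fun t => ip (x t) u) + `|u| \*: G)
    (df := fun t => ip (v t) u + `|u| *: G' t) _ _ pa ab) => t pt.
    apply: is_deriveD; first exact (is_derive_ipl ip_inner u (x_derive _ pt)).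
    exact: is_deriveZ (G_derive _ pt).
  have := ip_le_norm ip_inner (v t) u; have := speed_le _ pt.
  have := normr_ge0 u; rewrite /GRing.scale /=; nra.
have : `|u| ^+ 2 = ip (x b) u - ip (x a) u by rewrite -(ipBl ip_inner) ip_normr2.
have := normr_ge0 u; nra.
Qed.

End SpeedBound.

Lemma cvg_of_speed_bound {R : realType} {V : completeNormedModType R}
    {ip : V -> V -> R} {x v : R -> V} {G G' : R -> R} {p : R} :
  is_inner_product ip ->
  (forall t, p < t -> is_derive t 1 x (v t)) ->
  (forall t, p < t -> is_derive t 1 G (G' t)) ->
  (forall t, p < t -> `|v t| <= - G' t) ->
  (forall t, p < t -> 0 <= G t) ->
  exists l : V, x t @[t --> +oo] --> l.
Proof.
move=> ip_inner x_derive G_derive speed_le G_ge0.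
pose S := [set G t | t in [set t | p < t]].
have S_inf : has_inf S.
  split; first by exists (G (p + 1)), (p + 1) => //=; rewrite ltrDl.
  by exists 0 => _ [t pt <-]; exact: G_ge0.
suff : cvg (x @ +oo) by exists (lim (x @ +oo)).
apply: cauchy_cvg; apply/cauchyP => e e_gt0.
have [_ [a pa <-] Ga_lt] := inf_adherent e_gt0 S_inf.
exists (x a) => /=; near=> t.
have a_le_t : a <= t by near: t; apply: nbhs_pinfty_ge; rewrite num_real.
have := normB_le_of_speed_bound ip_inner x_derive G_derive speed_le pa a_le_t.
have : inf S <= G t.
  by apply: (ge_inf (proj2 S_inf)); exists t => //; exact: lt_le_trans a_le_t.
rewrite -ball_normE /= distrC; lra.
Unshelve. all: by end_near. Qed.

Section GradientFlow.
Context {R : realType} {H : completeNormedModType R} {ip : H -> H -> R}.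
Context {L : H -> R} {g : H -> H} {x : R -> H} {k : R}.
Hypothesis ip_inner : is_inner_product ip.
Hypothesis L_ge0 : forall y : H, 0 <= L y.
Hypothesis L_grad : is_gradient ip L g.
Hypothesis flow : forall t : R, 0 < t -> is_derive t (1 : R) x (- g (x t)).
Hypothesis k_gt0 : 0 < k.
Hypothesis grad_ge_sqrt :
  forall t : R, 0 < t -> 0 < L (x t) -> k * Num.sqrt (L (x t)) <= `|g (x t)|.

Lemma is_derive_energy {t : R} :
  0 < t -> is_derive t (1 : R) (L \o x) (- `|g (x t)| ^+ 2).
Proof.
move=> t_gt0; have [L_diff L_d] := L_grad (x t).
have [x_derivable x_derive] := flow t t_gt0.
have x_diff : differentiable x t by exact/derivable1_diffP.
have Lx_diff : differentiable (L \o x) t by exact: differentiable_comp.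
split; first exact/derivable1_diffP.
rewrite deriveE // diff_comp // /= -[X in 'd L _ X]deriveE // x_derive L_d.
case: (ip_inner) => ipC _ _ _.
by rewrite ipC -scaleN1r (ipZl ip_inner) (ip_normr2 ip_inner) mulN1r.
Qed.

Lemma energy_nincr {s t : R} : 0 < s -> s <= t -> L (x t) <= L (x s).
Proof.
apply: (ler0_is_derive_nincr (@is_derive_energy)) => u _.
by rewrite oppr_le0 sqr_ge0.
Qed.

Lemma grad_eq0_after_energy0 {t0 t : R} :
  0 < t0 -> L (x t0) = 0 -> t0 < t -> g (x t) = 0.
Proof.
move=> t0_gt0 Lxt0 t0t.
have Lx_eq0 s : t0 <= s -> L (x s) = 0.
  by move=> t0s; apply/eqP; rewrite eq_le L_ge0 andbT -Lxt0 energy_nincr.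
have [_ energy_min] : is_derive t 1 (L \o x) 0.
  apply: (@derive1_at_min _ _ t0 (t + 1)).
  - by rewrite ltW // (lt_trans t0t) // ltrDl.
  - by move=> s /[!in_itv] /andP[/(lt_trans t0_gt0) /is_derive_energy []].
  - by rewrite in_itv /= t0t ltrDl ltr01.
  - by move=> s /[!in_itv] /andP[t0s _]; rewrite /= Lx_eq0 ?L_ge0 // ltW.
have [_] := is_derive_energy (lt_trans t0_gt0 t0t).
by rewrite energy_min => /esym/eqP; rewrite oppr_eq0 sqrf_eq0 normr_eq0 => /eqP.
Qed.

Lemma gradient_flow_cvg : exists l : H, x t @[t --> +oo] --> l.
Proof.
have [[t0 [t0_gt0 Lxt0]] | Lx_neq0] := pselect (exists t0, 0 < t0 /\ L (x t0) = 0).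
  apply: (cvg_of_speed_bound (v := fun t => - g (x t)) (G := cst 0) (G' := cst 0)
    (p := t0) ip_inner) => // t t0t.
  - exact: flow t (lt_trans t0_gt0 t0t).
  - by rewrite (grad_eq0_after_energy0 t0_gt0 Lxt0 t0t) oppr0 normr0 oppr0.
have Lx_gt0 t : 0 < t -> 0 < L (x t).
  move=> t_gt0; rewrite lt_neqAle L_ge0 andbT eq_sym.
  by apply/eqP => Lxt0; apply: Lx_neq0; exists t.
apply: (cvg_of_speed_bound (v := fun t => - g (x t))
  (G := (2 / k) \*: (Num.sqrt \o (L \o x)))
  (G' := fun t => 2 / k *: ((2 * Num.sqrt (L (x t)))^-1 * - `|g (x t)| ^+ 2))
  (p := 0) ip_inner) => // t t_gt0.
- apply: is_deriveZ; apply: is_derive1_comp; last exact: is_derive_energy.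
  exact: is_derive1_sqrt (Lx_gt0 t t_gt0).
- have sqrt_gt0 : 0 < Num.sqrt (L (x t)) by rewrite sqrtr_gt0 Lx_gt0.
  rewrite normrN /GRing.scale /=.
  have -> : - (2 / k * ((2 * Num.sqrt (L (x t)))^-1 * - `|g (x t)| ^+ 2))
      = `|g (x t)| ^+ 2 / (k * Num.sqrt (L (x t))).
    by field; rewrite !gt_eqF.
  rewrite ler_pdivlMr ?mulr_gt0 //.
  have := grad_ge_sqrt t t_gt0 (Lx_gt0 t t_gt0); have := normr_ge0 (g (x t)); nra.
- by rewrite /= mulr_ge0 ?sqrtr_ge0 ?divr_ge0 ?ltW.
Qed.

Lemma gradient_flow_limit_energy0 {l : H} : x t @[t --> +oo] --> l -> L l = 0.
Proof.
move=> xl.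
have Lxl : (L \o x) @ +oo --> L l.
  exact: cvg_comp xl (differentiable_continuous (L_grad l).1).
have Ll_le t : 0 < t -> L l <= L (x t).
  move=> t_gt0; apply: (cvgr_to_le Lxl); near=> s.
  by apply: energy_nincr t_gt0 _; near: s; apply: nbhs_pinfty_ge; rewrite num_real.
apply/eqP; rewrite eq_le L_ge0 andbT leNgt; apply/negP => Ll_gt0.
pose K := k ^+ 2 * L l.
have K_gt0 : 0 < K by rewrite mulr_gt0 ?exprn_gt0.
have decay s t : 0 < s -> s <= t -> L (x t) + K * t <= L (x s) + K * s.
  apply: (ler0_is_derive_nincr (f := L \o x + K \*: id)
    (df := fun t => - `|g (x t)| ^+ 2 + K *: 1)) => u u_gt0.
    exact: is_deriveD (is_derive_energy u_gt0) (is_deriveZ _ _).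
  have Lxu_ge := Ll_le u u_gt0.
  have grad_sq : k ^+ 2 * L (x u) <= `|g (x u)| ^+ 2.
    rewrite -[L (x u)]sqr_sqrtr // -exprMn ler_sqr ?nnegrE //.
      exact: grad_ge_sqrt u u_gt0 (lt_le_trans Ll_gt0 Lxu_ge).
    by rewrite mulr_ge0 ?sqrtr_ge0 ?(ltW k_gt0).
  have := ler_wpM2l (ltW (exprn_gt0 2 k_gt0)) Lxu_ge.
  rewrite /K /GRing.scale /= mulr1; lra.
pose T := 2 + L (x 1) / K.
have T_ge1 : 1 <= T by have := divr_ge0 (L_ge0 (x 1)) (ltW K_gt0); rewrite /T; lra.
have := decay 1 T ltr01 T_ge1.
have : K * T = 2 * K + L (x 1) by rewrite /T mulrDr mulrCA divff ?gt_eqF // mulr1 mulrC.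
have := L_ge0 (x T); lra.
Unshelve. all: by end_near. Qed.

End GradientFlow.

Theorem proposition2p3 (R : realType) (H : completeNormedModType R)
  (ip : H -> H -> R) (L : H -> R) (gradL : H -> H) (c : R -> R) (x : R -> H) :
  is_inner_product ip ->
  (forall y, 0 <= L y) ->
  is_gradient ip L gradL -> C1_map gradL ->
  (forall r, 0 <= r -> 0 <= c r) ->
  (forall r s, 0 <= r -> r <= s -> c s <= c r) ->
  (forall r, 0 <= r -> forall y, `|y| <= r -> 0 < L y ->
     c r <= `|gradL y| / Num.sqrt (L y)) ->
  (forall r, 0 < r -> 0 < c r) ->
  (forall t : R, 0 < t -> is_derive t (1 : R) x (- gradL (x t))) ->
  x t @[t --> (0:R)^'+] --> x 0 ->
  (exists M : R, forall t, 0 <= t -> `|x t| <= M) ->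
  exists xinf : H, x t @[t --> (+oo : set_system R)] --> xinf /\ L xinf = 0.
Proof.
move=> ip_inner L_ge0 L_grad _ _ _ c_bound c_gt0 flow _ [M x_le_M].
have M_ge0 : 0 <= M := le_trans (normr_ge0 _) (x_le_M 0 (lexx 0)).
have k_gt0 : 0 < c (M + 1) by apply: c_gt0; rewrite ltr_wpDl.
have grad_ge_sqrt t : 0 < t -> 0 < L (x t) ->
    c (M + 1) * Num.sqrt (L (x t)) <= `|gradL (x t)|.
  move=> t_gt0 Lxt_gt0; rewrite -ler_pdivlMr ?sqrtr_gt0 //.
  apply: c_bound Lxt_gt0; first by rewrite addr_ge0.
  by rewrite (le_trans (x_le_M t (ltW t_gt0))) ?lerDl.
have [l xl] := gradient_flow_cvg ip_inner L_ge0 L_grad flow k_gt0 grad_ge_sqrt.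
exists l; split => //.
exact (gradient_flow_limit_energy0 ip_inner L_ge0 L_grad flow k_gt0 grad_ge_sqrt xl).
Qed.
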